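(* Let $r$, $s$, $c$ and $a_n$ be any integers and let $n$ be a positive integer, and assume $V_r\neq0$. Then \[ \sum_{a_{n-1}=c}^{a_n}\sum_{a_{n-2}=c}^{a_{n-1}}\cdots\sum_{a_0=c}^{a_1}\frac{W_{ra_0+s}}{V_r^{a_0}} =(-1)^n\frac{W_{r(a_n+2n)+s}}{q^{rn}V_r^{a_n}}-\frac{1}{V_r^{c-1}}\sum_{j=0}^{n-1}(-1)^{n-j}\frac{W_{r(2n-2j+c-1)+s}}{q^{r(n-j)}}\binom{a_n+j-c}{j}. \]
   Context: Let $a,b,p,q$ be complex numbers with $p\neq0$, $q\neq0$. The Horadam sequence $W_j=W_j(a,b;p,q)$ is defined by $W_0=a$, $W_1=b$, $W_j=pW_{j-1}-qW_{j-2}$ for $j\ge2$, and extended to negative indices by $W_{-m}=(pW_{-m+1}-W_{-m+2})/q$, so the recurrence holds for all integers. $V_j=W_j(2,p;p,q)$ is the Lucas sequence of the second kind. For integers $c,m$ and a function $f$ on the integers, $\sum_{k=c}^m f(k)$ denotes the usual sum if $m\ge c$, equals $0$ if $m=c-1$, and equals $-\sum_{k=m+1}^{c-1}f(k)$ if $m\le c-2$. The nested sum $\sum_{a_{n-1}=c}^{a_n}\cdots\sum_{a_0=c}^{a_1}g(a_0)$ is the iterated sum with $n$ summation signs: innermost over $a_0$ from $c$ to $a_1$, then $a_1$ from $c$ to $a_2$, ..., outermost $a_{n-1}$ from $c$ to $a_n$. For an integer $j\ge0$ and any number $y$, $\binom{y}{j}=y(y-1)\cdots(y-j+1)/j!$.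 *)

From HB Require Import structures.
From mathcomp Require Import all_boot all_order all_algebra.
From mathcomp Require Import complex.
From mathcomp Require Import Rstruct reals.

Set Implicit Arguments. Unset Strict Implicit. Unset Printing Implicit Defensive.
Import Order.TTheory GRing.Theory Num.Theory.
Local Open Scope ring_scope.

Notation CC := (complex Rdefinitions.R).

Section Horadam.
Variables (a b p q : CC).

(* (W_n, W_{n+1}) for n >= 0 *)
Fixpoint Wpos (n : nat) : CC * CC :=
  match n with
  | O => (a, b)
  | S m => let: (x, y) := Wpos m in (y, p * y - q * x)
  end.

(* (W_{-m}, W_{-m+1}) for m >= 0, using W_{-m} = (p W_{-m+1} - W_{-m+2})/q *)
Fixpoint Wneg (m : nat) : CC * CC :=
  match m with
  | O => (a, b)
  | S k => let: (x, y) := Wneg k in ((p * x - y) / q, x)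
  end.

Definition W (j : int) : CC :=
  match j with
  | Posz n => (Wpos n).1
  | Negz n => (Wneg n.+1).1
  end.
End Horadam.

Definition V (p q : CC) (j : int) : CC := W 2 p p q j.

(* Generalized sum  sum_{k=c}^{m} f k  with the paper's convention:
   usual sum if m >= c, 0 if m = c-1, - sum_{k=m+1}^{c-1} f k if m <= c-2. *)
Definition gsum (f : int -> CC) (c m : int) : CC :=
  if c <= m + 1 then \sum_(i < absz (m + 1 - c)%R) f (c + i%:Z)
  else - \sum_(i < absz (c - 1 - m)%R) f (m + 1 + i%:Z).

(* Iterated sum with n summation signs, outermost variable x = a_n:
   nested g c n x = sum_{a_{n-1}=c}^{x} ... sum_{a_0=c}^{a_1} g a_0. *)
Fixpoint nested (g : int -> CC) (c : int) (n : nat) (x : int) : CC :=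
  match n with
  | O => g x
  | S k => gsum (nested g c k) c x
  end.

Definition gbinom (y : CC) (j : nat) : CC :=
  (\prod_(i < j) (y - i%:R)) / (j`!)%:R.

From HB Require Import structures.
From mathcomp Require Import all_boot all_order all_algebra.
From mathcomp Require Import complex Rstruct reals.
From mathcomp Require Import ring.
Set Implicit Arguments. Unset Strict Implicit. Unset Printing Implicit Defensive.
Import Order.TTheory GRing.Theory Num.Theory.
Local Open Scope ring_scope.

(* Write R_n(x) for the right-hand side as a function of x = a_n.  The
   generalised sum telescopes for all integer bounds,
   sum_{k=c}^{x} (F k - F (k-1)) = F x - F (c-1), so by induction on n it
   suffices that R_0(x) = W_{rx+s}/V_r^x, R_{n+1}(x) - R_{n+1}(x-1) = R_n(x)
   and R_{n+1}(c-1) = 0.  The difference identity comes from Pascal's rule for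
   the binomials and from W_{m+r} + q^r W_{m-r} = V_r W_m; the vanishing at
   c-1 from binom(j-1, j) = 0 for j >= 1.  Finally W_{m+r} + q^r W_{m-r} =
   V_r W_m holds because both sides satisfy the Horadam recurrence in r and
   agree at r = 0 and r = 1. *)

Section SecondOrderRecurrence.
Variables (R : fieldType) (p q : R).

Definition linrec2 (u : int -> R) := forall j, u (j + 2) = p * u (j + 1) - q * u j.

Lemma linrec2D u v : linrec2 u -> linrec2 v -> linrec2 (fun j => u j + v j).
Proof. by move=> ru rv j; rewrite ru rv; ring. Qed.

Lemma linrec2Mr k u : linrec2 u -> linrec2 (fun j => u j * k).
Proof. by move=> ru j; rewrite ru; ring. Qed.

Lemma linrec2_shift m u : linrec2 u -> linrec2 (fun j => u (m + j)).
Proof. by move=> ru j /=; rewrite !(addrA m) ru. Qed.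

Hypothesis q_neq0 : q != 0.

Lemma linrec2_reflect m u : linrec2 u -> linrec2 (fun j => q ^ j * u (m - j)).
Proof.
move=> ru j /=.
have := ru (m - (j + 2)).
rewrite (_ : m - (j + 2) + 2 = m - j); last by ring.
rewrite (_ : m - (j + 2) + 1 = m - (j + 1)); last by ring.
move=> rec_m; have -> : u (m - (j + 2)) = (p * u (m - (j + 1)) - u (m - j)) / q.
  by rewrite rec_m; field.
by rewrite !expfzDr // expr1z; field.
Qed.

Lemma linrec2_eq u v : linrec2 u -> linrec2 v -> u 0 = v 0 -> u 1 = v 1 -> u =1 v.
Proof.
move=> ru rv e0 e1.
suff uv : forall j, u j = v j /\ u (j + 1) = v (j + 1) by move=> j; case: (uv j).
elim/int_ind => [|n [en en1]|n [en en1]]; first by rewrite add0r.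
- by rewrite intS addrC -addrA ru rv en en1.
- have e : - n.+1%:Z + 1 = - n%:Z by rewrite intS; ring.
  have e2 : - n.+1%:Z + 2 = - n%:Z + 1 by rewrite intS; ring.
  rewrite e; split => //.
  have := ru (- n.+1%:Z); have := rv (- n.+1%:Z).
  rewrite e e2 en en1 => -> ru_n.
  apply: (mulfI q_neq0); apply: oppr_inj; apply: (addrI (p * v (- n%:Z))).
  by rewrite -ru_n.
Qed.

End SecondOrderRecurrence.

Section Horadam.
Variables (a b p q : CC).
Local Notation W := (W a b p q).
Local Notation Wpos := (Wpos a b p q).
Local Notation Wneg := (Wneg a b p q).

Lemma Wpos_next n : Wpos n.+1 = ((Wpos n).2, p * (Wpos n).2 - q * (Wpos n).1).
Proof. by rewrite /=; case: (Wpos n). Qed.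

Lemma Wneg_next m : Wneg m.+1 = ((p * (Wneg m).1 - (Wneg m).2) / q, (Wneg m).1).
Proof. by rewrite /=; case: (Wneg m). Qed.

Lemma W_opp_nat m : W (- m%:Z) = (Wneg m).1.
Proof. by case: m. Qed.

Lemma W_1_sub_nat m : W (1 - m%:Z) = (Wneg m).2.
Proof.
case: m => [|m] //; rewrite Wneg_next -W_opp_nat.
by congr W; rewrite intS; ring.
Qed.

Hypothesis q_neq0 : q != 0.

Lemma W_rec : linrec2 p q W.
Proof.
case=> n.
  by rewrite -!PoszD addn2 addn1 /W !Wpos_next.
rewrite NegzE (_ : - n.+1%:Z + 2 = 1 - n%:Z); last by rewrite intS; ring.
rewrite (_ : - n.+1%:Z + 1 = - n%:Z); last by rewrite intS; ring.
by rewrite W_1_sub_nat !W_opp_nat Wneg_next /=; field.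
Qed.

End Horadam.

Lemma V_rec (p q : CC) : q != 0 -> linrec2 p q (V p q).
Proof. exact: W_rec. Qed.

Section AdditionFormula.
Variables (a b p q : CC).
Hypothesis q_neq0 : q != 0.
Local Notation W := (W a b p q).

Lemma V_mulW m r : V p q r * W m = W (m + r) + q ^ r * W (m - r).
Proof.
symmetry; move: r.
apply: (@linrec2_eq _ p q q_neq0 (fun r => W (m + r) + q ^ r * W (m - r))).
- apply: linrec2D; [apply: linrec2_shift | apply: linrec2_reflect => //]; exact: W_rec.
- by apply: linrec2Mr; exact: V_rec.
- by rewrite /= addr0 expr0z mul1r; ring.
- have := @W_rec a b p q q_neq0 (m - 1).
  rewrite subrK (_ : m - 1 + 2 = m + 1); last by ring.
  by move=> ->; rewrite expr1z /V /=; ring.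
Qed.
End AdditionFormula.

Lemma telescope_sumr_int (V : zmodType) (F : int -> V) (d : int) (N : nat) :
  \sum_(i < N) (F (d + i%:Z) - F (d + i%:Z - 1)) = F (d + N%:Z - 1) - F (d - 1).
Proof.
have := telescope_sumr (fun k => F (d + k%:Z - 1)) (leq0n N).
rewrite big_mkord /= addr0 => <-.
by apply: eq_bigr => k _; rewrite intS (addrC 1) addrA addrK.
Qed.

Lemma gsum_telescope (h F : int -> CC) c m :
  (forall k, h k = F k - F (k - 1)) -> gsum h c m = F m - F (c - 1).
Proof.
move=> hF; rewrite /gsum.
case: ifP => [c_le | /negbT c_gt]; under eq_bigr do rewrite hF;
  rewrite telescope_sumr_int gez0_abs.
- by rewrite addrCA subrr addr0 addrK.
- by rewrite subr_ge0.
- by rewrite addrK opprB (_ : m + 1 + (c - 1 - m) - 1 = c - 1) //; ring.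
- by move: c_gt; rewrite -ltNge subr_ge0 lerBrDr => /ltW.
Qed.

Lemma gbinom0 y : gbinom y 0 = 1.
Proof. by rewrite /gbinom big_ord0 fact0 divr1. Qed.

Lemma gbinom_nat_eq0 (k : nat) : gbinom k%:R k.+1 = 0.
Proof. by rewrite /gbinom big_ord_recr /= subrr mulr0 mul0r. Qed.

Lemma gbinomS y j : gbinom (y + 1) j.+1 = gbinom y j.+1 + gbinom y j.
Proof.
rewrite /gbinom big_ord_recl big_ord_recr /=.
under eq_bigr => i _ do rewrite /bump /= natrD opprD addrA addrK.
have j1_neq0 : (j.+1%:R : CC) != 0 by rewrite pnatr_eq0.
have jfact_neq0 : ((j`!)%:R : CC) != 0 by rewrite pnatr_eq0 -lt0n fact_gt0.
move: (\prod_(i < j) _) => P.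
by rewrite factS natrM -natr1; field; rewrite natr1 j1_neq0 jfact_neq0.
Qed.

Section NestedSum.
Variables (a b p q : CC) (r s c : int).
Hypotheses (q_neq0 : q != 0) (Vr_neq0 : V p q r != 0).
Local Notation W := (W a b p q).
Local Notation Vr := (V p q r).

Definition lead_term (n : nat) (x : int) : CC :=
  (-1) ^+ n * W (r * (x + 2 * n%:Z) + s) / (q ^ (r * n%:Z) * Vr ^ x).

Definition binom_coef (n j : nat) : CC :=
  (-1) ^+ (n - j) * W (r * (2 * n%:Z - 2 * j%:Z + c - 1) + s) / q ^ (r * (n%:Z - j%:Z)).

Definition binom_part (n : nat) (x : int) : CC :=
  \sum_(j < n) binom_coef n j * gbinom (x + j%:Z - c)%:~R j.

Definition closed_form (n : nat) (x : int) : CC :=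
  lead_term n x - (Vr ^ (c - 1))^-1 * binom_part n x.

Lemma closed_form0 x : closed_form 0 x = W (r * x + s) / Vr ^ x.
Proof.
rewrite /closed_form /binom_part /lead_term big_ord0.
by rewrite !mulr0 !addr0 subr0 expr0 expr0z !mul1r.
Qed.

Lemma binom_coefS n j : binom_coef n.+1 j.+1 = binom_coef n j.
Proof.
rewrite /binom_coef subSS !intS.
by congr (_ * W _ / q ^ _); ring.
Qed.

Lemma binom_part_pred_c n : binom_part n.+1 (c - 1) = binom_coef n.+1 0.
Proof.
rewrite /binom_part big_ord_recl gbinom0 mulr1 big1 ?addr0 // => j _.
rewrite lift0 (_ : c - 1 + j.+1%:Z - c = j%:Z); last by rewrite intS; ring.
by rewrite -pmulrn gbinom_nat_eq0 mulr0.
Qed.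

Lemma closed_form_pred_c n : closed_form n.+1 (c - 1) = 0.
Proof.
rewrite /closed_form binom_part_pred_c /binom_coef /lead_term subn0.
rewrite (_ : 2 * n.+1%:Z - 2 * 0%:Z + c - 1 = c - 1 + 2 * n.+1%:Z); last by ring.
rewrite (_ : n.+1%:Z - 0%:Z = n.+1%:Z); last by ring.
have qrn_neq0 := expfz_neq0 (r * n.+1%:Z) q_neq0.
have Vc1_neq0 := expfz_neq0 (c - 1) Vr_neq0.
by field; rewrite Vc1_neq0 qrn_neq0.
Qed.

Lemma binom_part_diff n x : binom_part n.+1 x - binom_part n.+1 (x - 1) = binom_part n x.
Proof.
rewrite /binom_part !big_ord_recl !gbinom0 opprD addrACA subrr add0r -sumrB.
apply: eq_bigr => j _; rewrite lift0 binom_coefS -mulrBr intS.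
rewrite (_ : x + (1 + j%:Z) - c = (x + j%:Z - c) + 1); last by ring.
rewrite (_ : x - 1 + (1 + j%:Z) - c = x + j%:Z - c); last by ring.
by rewrite intrD gbinomS addrAC subrr add0r.
Qed.

Lemma lead_term_diff n x : lead_term n.+1 x - lead_term n.+1 (x - 1) = lead_term n x.
Proof.
rewrite /lead_term.
set m := r * (x - 1 + 2 * n.+1%:Z) + s.
rewrite (_ : r * (x + 2 * n.+1%:Z) + s = m + r); last by rewrite /m; ring.
rewrite (_ : r * (x + 2 * n%:Z) + s = m - r); last by rewrite /m intS; ring.
rewrite intS mulrDr mulr1 expfzDr // -[in Vr ^ x](subrK 1 x) expfzDr // expr1z.
have Wmr : W (m + r) = Vr * W m - q ^ r * W (m - r) by rewrite V_mulW // addrK.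
have qrn_neq0 := expfz_neq0 (r * n%:Z) q_neq0.
have qr_neq0 := expfz_neq0 r q_neq0.
have Vx1_neq0 := expfz_neq0 (x - 1) Vr_neq0.
by rewrite Wmr exprS; field; rewrite Vr_neq0 Vx1_neq0 qrn_neq0 qr_neq0.
Qed.

Lemma closed_form_diff n x : closed_form n.+1 x - closed_form n.+1 (x - 1) = closed_form n x.
Proof.
by rewrite /closed_form -(lead_term_diff n x) -(binom_part_diff n x); ring.
Qed.

Lemma nested_closed_form n x :
  nested (fun k => W (r * k + s) / Vr ^ k) c n x = closed_form n x.
Proof.
elim: n x => [|n IH] x /=; first by rewrite closed_form0.
rewrite (@gsum_telescope _ (closed_form n.+1)) => [|k].
  by rewrite closed_form_pred_c subr0.
by rewrite IH closed_form_diff.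
Qed.

End NestedSum.

Theorem theorem3 (a b p q : CC) (hp : p != 0) (hq : q != 0)
  (r s c an : int) (n : nat) (hn : (0 < n)%N) (hV : V p q r != 0) :
  nested (fun k : int => W a b p q (r * k + s) / V p q r ^ k) c n an =
  (-1) ^+ n * W a b p q (r * (an + 2 * n%:Z) + s) / (q ^ (r * n%:Z) * V p q r ^ an)
  - (V p q r ^ (c - 1))^-1 *
    \sum_(j < n) (-1) ^+ (n - j) * W a b p q (r * (2 * n%:Z - 2 * j%:Z + c - 1) + s)
                 / q ^ (r * (n%:Z - j%:Z)) * gbinom (an + j%:Z - c)%:~R j.
Proof.
exact: nested_closed_form.
Qed.
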